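(* Let $n\ge2$, $\mathbf p^0\in\Delta_n$, $\mathbf p^{t+1}=F(\mathbf p^t)$. Then the sequence $L^t=\sum_{k=1}^n(p^t_k)^2$, $t=0,1,\dots$, is (non-strictly) decreasing: $L^{t+1}\le L^t$ for all $t$.
   Context: $\Delta_n=\{\mathbf p\in\mathbb R^n: p_i\ge 0,\ \sum_i p_i=1\}$. For $\mathbf p\in\Delta_n$, $L(\mathbf p)=\sum_{k}p_k^2$ and $F(\mathbf p)_i=p_i\frac{n-p_i}{n-L(\mathbf p)}$. *)

From mathcomp Require Import all_boot all_order all_algebra.
Set Implicit Arguments. Unset Strict Implicit. Unset Printing Implicit Defensive.
Import Order.TTheory GRing.Theory Num.Theory.
Local Open Scope ring_scope.

Definition simplex (R : realFieldType) (n : nat) (p : 'I_n -> R) : Prop :=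
  (forall i, 0 <= p i) /\ \sum_(i < n) p i = 1.

Definition Lsq (R : realFieldType) (n : nat) (p : 'I_n -> R) : R :=
  \sum_(k < n) p k ^+ 2.

Definition Fmap (R : realFieldType) (n : nat) (p : 'I_n -> R) : 'I_n -> R :=
  fun i => p i * (n%:R - p i) / (n%:R - Lsq p).

Definition traj (R : realFieldType) (n : nat) (p0 : 'I_n -> R) (t : nat) : 'I_n -> R :=
  iter t (@Fmap R n) p0.

From mathcomp Require Import all_boot all_order all_algebra.
From mathcomp Require Import ring lra.
Import Order.TTheory GRing.Theory Num.Theory.
Local Open Scope ring_scope.

(* Write D = n - L(p) > 0. Since sum_i p_i (n - p_i) = D, the map F sends the
   simplex to itself. For the decrease of L one checks the polynomial identity
     (p_i (n - p_i))^2 = a p_i^2 + b p_i - p_i (p_i - L)^2 (2n - p_i - 2L)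
   with a = n^2 - 4nL + 3L^2 and b = 2L^2 D; summing over i with sum p_i = 1
   and sum p_i^2 = L gives sum_i (p_i (n - p_i))^2 = L D^2 - (a nonnegative
   sum), i.e. L(F p) <= L(p). *)

Section SimplexPoint.
Variables (R : realFieldType) (n : nat) (p : 'I_n -> R).
Hypothesis p_simplex : simplex p.

Lemma simplex_ge0 i : 0 <= p i.
Proof. by case: p_simplex. Qed.

Lemma simplex_le1 i : p i <= 1.
Proof.
case: p_simplex => p_ge0 <-; rewrite (bigD1 i) //= lerDl.
by apply: sumr_ge0 => j _; exact: p_ge0.
Qed.

Lemma Lsq_le1 : Lsq p <= 1.
Proof.
case: p_simplex => _ <-; apply: ler_sum => i _.
have := simplex_ge0 i; have := simplex_le1 i; rewrite expr2; nra.
Qed.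

Lemma sum_mul_subLsq : \sum_(i < n) p i * (n%:R - p i) = n%:R - Lsq p.
Proof.
case: p_simplex => _ sum_p1.
rewrite /Lsq -[n%:R in RHS]mul1r -sum_p1 mulr_suml -sumrB.
by apply: eq_bigr => i _; rewrite mulrBr expr2.
Qed.

Hypothesis n_ge2 : (2 <= n)%N.

Lemma natr_ge2 : 2 <= n%:R :> R.
Proof. by rewrite (ler_nat R 2 n). Qed.

Lemma subLsq_gt0 : 0 < n%:R - Lsq p.
Proof. by have := natr_ge2; have := Lsq_le1; lra. Qed.

Lemma Fmap_simplex : simplex (Fmap p).
Proof.
have D_gt0 := subLsq_gt0; split => [i|].
- apply: divr_ge0; last exact: ltW.
  apply: mulr_ge0; first exact: simplex_ge0.
  by have := simplex_le1 i; have := natr_ge2; lra.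
- by rewrite /Fmap -mulr_suml sum_mul_subLsq divff // gt_eqF.
Qed.

Lemma sum_sqr_mul_subLsq :
  \sum_(i < n) (p i * (n%:R - p i)) ^+ 2
  = Lsq p * (n%:R - Lsq p) ^+ 2
    - \sum_(i < n) p i * (p i - Lsq p) ^+ 2 * (2 * n%:R - p i - 2 * Lsq p).
Proof.
case: p_simplex => _ sum_p1; set L := Lsq p.
set a := n%:R ^+ 2 - 4 * n%:R * L + 3 * L ^+ 2; set b := 2 * L ^+ 2 * (n%:R - L).
have split_sqr i : (p i * (n%:R - p i)) ^+ 2
    = (a * p i ^+ 2 + b * p i) - p i * (p i - L) ^+ 2 * (2 * n%:R - p i - 2 * L).
  by rewrite /a /b; ring.
rewrite (eq_bigr _ (fun i _ => split_sqr i)) sumrB big_split /=.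
rewrite -!mulr_sumr sum_p1 -/(Lsq p) -/L mulr1 /a /b.
congr (_ - _); ring.
Qed.

Lemma Lsq_Fmap_le : Lsq (Fmap p) <= Lsq p.
Proof.
have D_gt0 := subLsq_gt0.
rewrite /Lsq /Fmap -/(Lsq p).
under eq_bigr => i _ do rewrite expr_div_n.
rewrite -mulr_suml ler_pdivrMr ?exprn_gt0 // sum_sqr_mul_subLsq gerBl.
apply: sumr_ge0 => i _.
apply: mulr_ge0; first by rewrite mulr_ge0 ?simplex_ge0 ?sqr_ge0.
by have := simplex_le1 i; have := Lsq_le1; have := natr_ge2; lra.
Qed.

End SimplexPoint.

Lemma traj_simplex (R : realFieldType) (n : nat) (p0 : 'I_n -> R) :
  (2 <= n)%N -> simplex p0 -> forall t, simplex (traj p0 t).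
Proof.
move=> n_ge2 p0_simplex; elim=> [|t IHt] //.
by rewrite /traj iterS; exact: Fmap_simplex.
Qed.

Theorem lemma1 (R : realFieldType) (n : nat) (p0 : 'I_n -> R) :
  (2 <= n)%N -> simplex p0 ->
  forall t : nat, Lsq (traj p0 t.+1) <= Lsq (traj p0 t).
Proof.
move=> n_ge2 p0_simplex t; rewrite /traj iterS.
exact/Lsq_Fmap_le/n_ge2/traj_simplex.
Qed.
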